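(* Let $G=C_{2n}(a,n)$ with $a\in\{1,2\}$ be a connected cubic circulant graph. Then the induced matching number of $G$ is $\operatorname{im}(G)=\lfloor n/2\rfloor$.
   Context: For integers $1\le a<n$, $C_{2n}(a,n)$ is the simple graph on vertex set $[2n]$ in which distinct vertices $i,j$ are adjacent iff $|i-j|\in\{a,n,2n-a\}$. A matching $M$ of a graph $G$ is a set of pairwise disjoint edges; it is induced if the edges of $M$ are exactly the edges of the induced subgraph of $G$ on the vertices covered by $M$. $\operatorname{im}(G)$ is the maximum size of an induced matching of $G$. *)

From mathcomp Require Import all_boot.
Set Implicit Arguments. Unset Strict Implicit. Unset Printing Implicit Defensive.

Section Graph.
Variables (T : finType) (e : rel T).

Definition is_edge (E : {set T}) : bool :=
  [exists x, exists y, e x y && (E == [set x; y])].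

Definition matching (M : {set {set T}}) : bool :=
  [forall E in M, is_edge E] && trivIset M.

Definition induced_matching (M : {set {set T}}) : bool :=
  matching M &&
  [forall x in cover M, forall y in cover M, e x y ==> ([set x; y] \in M)].

Definition im : nat := \max_(M : {set {set T}} | induced_matching M) #|M|.

Definition cubic : Prop := forall x : T, #|[set y | e x y]| = 3.

Definition connected : Prop := forall x y : T, connect e x y.
End Graph.

Definition absd (i j : nat) : nat := (i - j) + (j - i).

(* C_{2n}(a,n) on vertex set 'I_(2n) = {0,...,2n-1} (shifted copy of [2n]) *)
Definition circ_adj (n a : nat) : rel 'I_(2 * n) :=
  fun i j => (i != j) &&
    [|| absd i j == a, absd i j == n | absd i j == 2 * n - a].
Arguments circ_adj : clear implicits.

(* The vertices of an induced matching M cover a set C of 2|M| vertices, each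
   with exactly one neighbour in C.  Group the 2n vertices into the n rungs
   {r, r + n}.  A rung lying entirely in C is matched to itself, so the rung
   a steps further (mod n) misses C; hence no more rungs are full than are
   empty and |C| <= n.  Conversely the rungs are edges, and rungs pairwise not
   a apart (mod n) form an induced matching: the even rungs when a = 1, and
   the rungs congruent to 0 or 1 mod 4 when a = 2, where connectedness forces
   n to be odd. *)

From mathcomp Require Import all_boot zify.
Set Implicit Arguments. Unset Strict Implicit. Unset Printing Implicit Defensive.

Section InducedMatching.
Variables (T : finType) (e : rel T).
Hypothesis e_irr : irreflexive e.

Definition at_most_one_neighbor (C : {set T}) : Prop :=
  {in C & C & C, forall x y z, e x y -> e x z -> y = z}.

Lemma card_cover_matching M : matching e M -> #|cover M| = 2 * #|M|.
Proof.
case/andP=> /forall_inP edgeM /eqP <-; rewrite mulnC -sum_nat_const.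
apply: eq_bigr => E /edgeM /existsP[x /existsP[y /andP[exy /eqP->]]].
by rewrite cards2; case: eqP exy => [->|//]; rewrite e_irr.
Qed.

Lemma induced_matching_cover M :
  induced_matching e M -> at_most_one_neighbor (cover M).
Proof.
case/andP=> /andP[_ trivM] /forall_inP indM x y z xM yM zM exy exz.
have edgeM u : u \in cover M -> e x u -> [set x; u] \in M.
  by move=> uM exu; move/forall_inP/(_ u uM)/implyP/(_ exu): (indM x xM).
have Exyz : [set x; y] = [set x; z].
  apply/eqP; apply: contraT => neq.
  move/disjoint_setI0/setP/(_ x): (trivIsetP trivM _ _ (edgeM y yM exy) (edgeM z zM exz) neq).
  by rewrite !inE eqxx.
have : z \in [set x; y] by rewrite Exyz !inE eqxx orbT.
by rewrite !inE => /orP[/eqP zx | /eqP //]; rewrite zx e_irr in exz.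
Qed.

Lemma im_leq_half k :
  (forall C, at_most_one_neighbor C -> #|C| <= k) -> im e <= k %/ 2.
Proof.
move=> bound; apply/bigmax_leqP => M indM; rewrite leq_divRL // mulnC.
rewrite -card_cover_matching; last by case/andP: indM.
exact/bound/induced_matching_cover.
Qed.

Lemma leq_im M : induced_matching e M -> #|M| <= im e.
Proof. exact: leq_bigmax_cond. Qed.

End InducedMatching.

Ltac case_ifs := repeat match goal with |- context [if ?b then _ else _] => case: ifP => ? end.

Section Circulant.
Variables n a : nat.
Hypotheses (a_gt0 : 0 < a) (a_lt_n : a < n).

Local Notation G := (circ_adj n a).

Lemma circ_adjE (x y : 'I_(2 * n)) : G x y =
  (x != y :> nat) && [|| absd x y == a, absd x y == n | absd x y == 2 * n - a].
Proof. by []. Qed.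

Lemma circ_adj_irr : irreflexive G.
Proof. by move=> x; rewrite circ_adjE eqxx. Qed.

Definition rung_of (v : nat) : nat := if v < n then v else v - n.

Definition next_rung (r : nat) : nat := if r + a < n then r + a else r + a - n.

(* Each vertex of C is sent to its rung, except the upper vertex of a rung
   lying entirely in C: that one is sent [a] rungs further, to a rung which
   contains no vertex of C when C has no vertex with two neighbours in C. *)
Definition slot (C : {set 'I_(2 * n)}) (v : 'I_(2 * n)) : nat :=
  if [exists u in C, u + n == v :> nat] then next_rung (v - n) else rung_of v.

Lemma slot_lt C v : slot C v < n.
Proof.
have := ltn_ord v; rewrite /slot /next_rung /rung_of.
by case: existsP => [[u /andP[_ /eqP]]|_]; case_ifs; lia.
Qed.

Section Slot.
Variable C : {set 'I_(2 * n)}.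
Hypothesis C1 : at_most_one_neighbor G C.

Lemma next_rung_full_neq (u v w : 'I_(2 * n)) : u \in C -> v \in C -> w \in C ->
  u + n = v -> next_rung (v - n) != rung_of w.
Proof.
move=> uC vC wC uv; apply/eqP => E.
have vl := ltn_ord v; have wl := ltn_ord w.
have Guv : G u v by rewrite circ_adjE /absd; lia.
have Gvu : G v u by rewrite circ_adjE /absd; lia.
have wu : w != u :> nat by move: E; rewrite /next_rung /rung_of; case_ifs; lia.
have wv : w != v :> nat by move: E; rewrite /next_rung /rung_of; case_ifs; lia.
have [Gvw | Guw] : G v w \/ G u w.
  by move: E; rewrite /next_rung /rung_of !circ_adjE /absd; case_ifs; lia.
- by move: wu; rewrite (C1 vC uC wC Gvu Gvw) eqxx.
- by move: wv; rewrite (C1 uC vC wC Guv Guw) eqxx.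
Qed.

Lemma slot_inj : {in C &, injective (slot C)}.
Proof.
move=> v w vC wC; have vl := ltn_ord v; have wl := ltn_ord w.
rewrite /slot; case: existsP => [[u /andP[uC /eqP uv]] | vnf];
  case: existsP => [[u' /andP[u'C /eqP u'w]] | wnf] E.
- by apply: ord_inj; move: E; rewrite /next_rung; case_ifs; lia.
- by case/eqP: (next_rung_full_neq uC vC wC uv).
- by case/eqP: (next_rung_full_neq u'C wC vC u'w).
- have : v = w :> nat \/ v = w + n :> nat \/ w = v + n :> nat.
    by move: E; rewrite /rung_of; case_ifs; lia.
  case=> [/ord_inj-> // | [vw | wv]].
    by exfalso; apply: vnf; exists w; rewrite wC vw eqxx.
  by exfalso; apply: wnf; exists v; rewrite vC wv eqxx.
Qed.

End Slot.

Lemma card_at_most_one_neighbor C : at_most_one_neighbor G C -> #|C| <= n.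
Proof.
move=> C1; rewrite -[X in _ <= X]card_ord.
apply: (@leq_card_in _ _ (fun v => Ordinal (slot_lt C v))) => v w vC wC.
by move/(congr1 val)/(slot_inj C1 vC wC).
Qed.

Lemma im_circ_adj_leq : im G <= n %/ 2.
Proof. exact/im_leq_half/card_at_most_one_neighbor/circ_adj_irr. Qed.

Definition rung (r : nat) : {set 'I_(2 * n)} :=
  [set x : 'I_(2 * n) | (x == r :> nat) || (x == r + n :> nat)].

Lemma mem_rung x r : (x \in rung r) = (x == r :> nat) || (x == r + n :> nat).
Proof. by rewrite inE. Qed.

Lemma rung_is_edge r : r < n -> is_edge G (rung r).
Proof.
move=> rn; have r0 : r < 2 * n by lia.
have r1 : r + n < 2 * n by lia.
apply/existsP; exists (Ordinal r0); apply/existsP; exists (Ordinal r1).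
rewrite circ_adjE /absd /=; apply/andP; split; first lia.
by apply/eqP/setP => x; rewrite mem_rung !inE -!val_eqE.
Qed.

Lemma rung_inj r s : r < n -> s < n -> rung r = rung s -> r = s.
Proof.
move=> rn sn; have r0 : r < 2 * n by lia.
by move/setP/(_ (Ordinal r0)); rewrite !mem_rung /= eqxx; lia.
Qed.

Lemma disjoint_rung r s : r < n -> s < n -> r != s -> [disjoint rung r & rung s].
Proof. by move=> rn sn rs; apply/pred0P => x /=; apply/negbTE; rewrite !mem_rung; lia. Qed.

Lemma circ_adj_rung x y r s : x \in rung r -> y \in rung s -> r < n -> s < n ->
  (r + a != s) && (r + a != s + n) -> (s + a != r) && (s + a != r + n) ->
  G x y -> r = s.
Proof. by rewrite !mem_rung circ_adjE /absd; lia. Qed.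

Lemma rung_set2 x y r : x \in rung r -> y \in rung r -> x != y -> [set x; y] = rung r.
Proof.
rewrite !mem_rung -val_eqE /= => xr yr xy; apply/setP => z.
by rewrite mem_rung !inE -!val_eqE /=; apply/idP/idP; lia.
Qed.

Section Rungs.
Variables (m : nat) (f : 'I_m -> nat).
Hypotheses (f_lt : forall i, f i < n) (f_inj : injective f).
Hypothesis f_sep : forall i j, (f i + a != f j) && (f i + a != f j + n).

Let M := [set rung (f i) | i : 'I_m].

Lemma card_rungs : #|M| = m.
Proof.
by rewrite card_imset ?card_ord // => i j /rung_inj E; apply/f_inj/E.
Qed.

Lemma induced_matching_rungs : induced_matching G M.
Proof.
apply/andP; split; first (apply/andP; split).
- by apply/forall_inP => _ /imsetP[i _ ->]; apply: rung_is_edge.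
- apply/trivIsetP => _ _ /imsetP[i _ ->] /imsetP[j _ ->] neq.
  by apply: disjoint_rung => //; apply: contraNneq neq => /f_inj ->.
- apply/forall_inP => x /bigcupP[_ /imsetP[i _ ->] xi].
  apply/forall_inP => y /bigcupP[_ /imsetP[j _ ->] yj].
  apply/implyP => Gxy.
  have Eij := circ_adj_rung xi yj (f_lt i) (f_lt j) (f_sep i j) (f_sep j i) Gxy.
  rewrite -Eij in yj; apply/imsetP; exists i => //.
  by apply: rung_set2 => //; apply: contraTneq Gxy => ->; rewrite circ_adj_irr.
Qed.

Lemma leq_im_rungs : m <= im G.
Proof. by rewrite -card_rungs; apply/leq_im/induced_matching_rungs. Qed.

End Rungs.

End Circulant.

Lemma circ_adj_disconnected_even n a :
  ~~ odd a -> ~~ odd n -> 0 < n -> ~ connected (circ_adj n a).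
Proof.
move=> a_even n_even n_gt0 conn.
have v0 : 0 < 2 * n by lia.
have v1 : 1 < 2 * n by lia.
have odd_closed : closed (circ_adj n a) [pred x : 'I_(2 * n) | odd x].
  by move=> x y; rewrite circ_adjE /absd !inE /= => Gxy; lia.
by have := closed_connect odd_closed (conn (Ordinal v0) (Ordinal v1)).
Qed.

Theorem lemma2p2 (n a : nat) :
  1 <= a -> a < n -> (a == 1) || (a == 2) ->
  cubic (circ_adj n a) -> connected (circ_adj n a) ->
  im (circ_adj n a) = n %/ 2.
Proof.
move=> a_gt0 a_lt_n a12 _ conn.
apply/eqP; rewrite eqn_leq im_circ_adj_leq //=.
case/orP: a12 => /eqP a_eq; subst a.
- apply: (@leq_im_rungs _ _ a_gt0 a_lt_n _ (fun i : 'I_(n %/ 2) => 2 * i)).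
  + move=> i; have := ltn_ord i; lia.
  + by move=> i j /eqP; rewrite eqn_mul2l => /eqP/ord_inj.
  + move=> i j; have := ltn_ord i; lia.
- have n_odd : odd n.
    apply: contraT => n_even.
    by case: (circ_adj_disconnected_even (a := 2) isT n_even _ conn); lia.
  apply: (@leq_im_rungs _ _ a_gt0 a_lt_n _ (fun i : 'I_(n %/ 2) => i + 2 * (i %/ 2))).
  + move=> i; have := ltn_ord i; lia.
  + move=> i j E; apply: ord_inj; lia.
  + move=> i j; have := ltn_ord i; have := ltn_ord j; lia.
Qed.
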